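(* Let $h$ be a triangle center function whose locus over the 3-periodics of $E$ is an ellipse. Let $T_0$ be the 3-periodic with vertex $(a,0)$ and $T_{\pi/2}$ the 3-periodic with vertex $(0,b)$, and assume $X_h(T_0)$ and $X_h(T_{\pi/2})$ are defined. Then $X_h(T_0)=(\pm\alpha,0)$ and $X_h(T_{\pi/2})=(0,\pm\beta)$ for some $\alpha,\beta>0$, and the locus is the ellipse $x^2/\alpha^2+y^2/\beta^2=1$.
   Context: Fix real numbers $a>b>0$ and let $E$ be the ellipse $x^2/a^2+y^2/b^2=1$ (the elliptic billiard). A 3-periodic is a non-degenerate triangle $P_1P_2P_3$ with all vertices on $E$ such that at each vertex $P_j$ the normal line to $E$ at $P_j$ bisects the interior angle of the triangle at $P_j$. Every point of $E$ is a vertex of exactly one 3-periodic. For a triangle $P_1P_2P_3$ let $s_1=|P_2P_3|$, $s_2=|P_3P_1|$, $s_3=|P_1P_2|$. A triangle center function is a function $h(x,y,z)$ that is homogeneous and bisymmetric ($h(x,y,z)=h(x,z,y)$). The associated triangle center is $X_h=\dfrac{p s_1P_1+q s_2P_2+r s_3P_3}{p s_1+q s_2+r s_3}$ with $p=h(s_1,s_2,s_3)$, $q=h(s_2,s_3,s_1)$, $r=h(s_3,s_1,s_2)$. The locus of $X_h$ is the set of points $X_h(T)$ as $T$ ranges over all 3-periodics for which $X_h(T)$ is defined. *)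

From Stdlib Require Import Reals Lra.
Open Scope R_scope.

Definition pt : Type := (R * R)%type.

Definition onE (a b : R) (P : pt) : Prop :=
  (fst P)^2 / a^2 + (snd P)^2 / b^2 = 1.

Definition dist (P Q : pt) : R :=
  sqrt ((fst P - fst Q)^2 + (snd P - snd Q)^2).

Definition noncollinear (P1 P2 P3 : pt) : Prop :=
  (fst P2 - fst P1) * (snd P3 - snd P1) - (snd P2 - snd P1) * (fst P3 - fst P1) <> 0.

(* The normal line to E at P (direction (x/a^2, y/b^2)) is the line of the
   internal bisector of the angle QPR, whose direction is the sum of the
   unit vectors from P towards Q and towards R. *)
Definition normal_bisects (a b : R) (P Q R' : pt) : Prop :=
  let nx := fst P / a^2 in
  let ny := snd P / b^2 in
  let wx := (fst Q - fst P) / dist P Q + (fst R' - fst P) / dist P R' in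
  let wy := (snd Q - snd P) / dist P Q + (snd R' - snd P) / dist P R' in
  nx * wy - ny * wx = 0.

Definition is3periodic (a b : R) (P1 P2 P3 : pt) : Prop :=
  noncollinear P1 P2 P3 /\
  onE a b P1 /\ onE a b P2 /\ onE a b P3 /\
  normal_bisects a b P1 P2 P3 /\
  normal_bisects a b P2 P3 P1 /\
  normal_bisects a b P3 P1 P2.

Definition has_vertex (V P1 P2 P3 : pt) : Prop := P1 = V \/ P2 = V \/ P3 = V.

Definition homogeneous (h : R -> R -> R -> option R) : Prop :=
  exists k : R, forall x y z t, 0 < x -> 0 < y -> 0 < z -> 0 < t ->
    h (t * x) (t * y) (t * z) = option_map (fun v => Rpower t k * v) (h x y z).

Definition bisymmetric (h : R -> R -> R -> option R) : Prop :=
  forall x y z, 0 < x -> 0 < y -> 0 < z -> h x y z = h x z y.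

Definition Xh (h : R -> R -> R -> option R) (P1 P2 P3 : pt) : option pt :=
  let s1 := dist P2 P3 in
  let s2 := dist P3 P1 in
  let s3 := dist P1 P2 in
  match h s1 s2 s3, h s2 s3 s1, h s3 s1 s2 with
  | Some p, Some q, Some r =>
      let d := p * s1 + q * s2 + r * s3 in
      if Req_EM_T d 0 then None
      else Some ((p * s1 * fst P1 + q * s2 * fst P2 + r * s3 * fst P3) / d,
                 (p * s1 * snd P1 + q * s2 * snd P2 + r * s3 * snd P3) / d)
  | _, _, _ => None
  end.

Definition locus (a b : R) (h : R -> R -> R -> option R) (X : pt) : Prop :=
  exists P1 P2 P3, is3periodic a b P1 P2 P3 /\ Xh h P1 P2 P3 = Some X.

Definition is_ellipse (S : pt -> Prop) : Prop :=
  exists cx cy p q r : R, 0 < p /\ 0 < p * r - q^2 /\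
    forall X : pt, S X <->
      p * (fst X - cx)^2 + 2 * q * (fst X - cx) * (snd X - cy)
        + r * (snd X - cy)^2 = 1.

(* A reflection of the plane in an axis maps the billiard, and hence the family of
   3-periodics, to itself, and X_h commutes with isometries; so the locus is invariant
   under both axis reflections, which forces an ellipse to be centred at the origin with
   axes along the coordinate axes.  The 3-periodic through the vertex (a, 0) is itself
   symmetric about the x-axis (its two other vertices are mirror images, since the normal
   at (a, 0) is the x-axis), and X_h is a symmetric function of the vertices when h is
   bisymmetric, so X_h of that triangle lies on the x-axis; likewise for (0, b).  These
   two points are the intercepts of the locus. *)

From Stdlib Require Import Reals Lra.
Open Scope R_scope.

Lemma pow2_eq_0 (x : R) : x ^ 2 = 0 -> x = 0.
Proof. intros H; apply Rsqr_0_uniq; unfold Rsqr; lra. Qed.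

Lemma pow2_inj_pos (x y : R) : 0 < x -> 0 < y -> x ^ 2 = y ^ 2 -> x = y.
Proof.
  intros Hx Hy H.
  assert (Hprod : (x - y) * (x + y) = 0)
    by (replace ((x - y) * (x + y)) with (x ^ 2 - y ^ 2) by ring; lra).
  apply Rmult_integral in Hprod as [? | ?]; lra.
Qed.

Lemma dist_sqr (P Q : pt) : dist P Q ^ 2 = (fst P - fst Q) ^ 2 + (snd P - snd Q) ^ 2.
Proof.
  unfold dist; rewrite pow2_sqrt; [reflexivity |].
  pose proof (pow2_ge_0 (fst P - fst Q)); pose proof (pow2_ge_0 (snd P - snd Q)); lra.
Qed.

Lemma dist_sym (P Q : pt) : dist P Q = dist Q P.
Proof. unfold dist; f_equal; ring. Qed.

Lemma dist_pos (P Q : pt) : P <> Q -> 0 < dist P Q.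
Proof.
  destruct P as [x1 y1], Q as [x2 y2]; intros Hne; unfold dist; cbn [fst snd].
  apply sqrt_lt_R0, Rnot_le_lt; intros Hle; apply Hne.
  pose proof (pow2_ge_0 (x1 - x2)); pose proof (pow2_ge_0 (y1 - y2)).
  assert (Hx : x1 - x2 = 0) by (apply pow2_eq_0; lra).
  assert (Hy : y1 - y2 = 0) by (apply pow2_eq_0; lra).
  f_equal; lra.
Qed.

Lemma noncollinear_neq (P1 P2 P3 : pt) :
  noncollinear P1 P2 P3 -> P1 <> P2 /\ P2 <> P3 /\ P3 <> P1.
Proof. unfold noncollinear; intros H; repeat split; intros ->; apply H; ring. Qed.

Lemma noncollinear_sides_pos (P1 P2 P3 : pt) : noncollinear P1 P2 P3 ->
  0 < dist P1 P2 /\ 0 < dist P2 P3 /\ 0 < dist P3 P1.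
Proof.
  intros H; destruct (noncollinear_neq _ _ _ H) as (H12 & H23 & H31).
  repeat split; apply dist_pos; assumption.
Qed.

Lemma is3periodic_rot (a b : R) (P1 P2 P3 : pt) :
  is3periodic a b P1 P2 P3 -> is3periodic a b P2 P3 P1.
Proof.
  unfold is3periodic, noncollinear; intros (Hnc & H1 & H2 & H3 & N1 & N2 & N3).
  repeat split; try assumption.
  intros Hz; apply Hnc; rewrite <- Hz; ring.
Qed.

Lemma Xh_rot (h : R -> R -> R -> option R) (P1 P2 P3 : pt) :
  Xh h P2 P3 P1 = Xh h P1 P2 P3.
Proof.
  unfold Xh.
  destruct (h (dist P2 P3) (dist P3 P1) (dist P1 P2)) as [p|];
  destruct (h (dist P3 P1) (dist P1 P2) (dist P2 P3)) as [q|];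
  destruct (h (dist P1 P2) (dist P2 P3) (dist P3 P1)) as [r|]; try reflexivity.
  replace (q * dist P3 P1 + r * dist P1 P2 + p * dist P2 P3)
    with (p * dist P2 P3 + q * dist P3 P1 + r * dist P1 P2) by ring.
  destruct Req_EM_T; [reflexivity |].
  f_equal; f_equal; f_equal; ring.
Qed.

(* Transposing two vertices permutes the side lengths by a transposition fixing the
   first argument of each weight, which bisymmetry absorbs. *)
Lemma Xh_transpose (h : R -> R -> R -> option R) (P1 P2 P3 : pt) :
  bisymmetric h -> noncollinear P1 P2 P3 -> Xh h P1 P3 P2 = Xh h P1 P2 P3.
Proof.
  intros Hbis Hnc; destruct (noncollinear_sides_pos _ _ _ Hnc) as (H12 & H23 & H31).
  unfold Xh; rewrite (dist_sym P3 P2), (dist_sym P2 P1), (dist_sym P1 P3).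
  rewrite (Hbis (dist P2 P3) (dist P1 P2) (dist P3 P1)),
    (Hbis (dist P1 P2) (dist P3 P1) (dist P2 P3)),
    (Hbis (dist P3 P1) (dist P2 P3) (dist P1 P2)) by assumption.
  destruct (h (dist P2 P3) (dist P3 P1) (dist P1 P2)) as [p|];
  destruct (h (dist P3 P1) (dist P1 P2) (dist P2 P3)) as [q|];
  destruct (h (dist P1 P2) (dist P2 P3) (dist P3 P1)) as [r|]; try reflexivity.
  replace (p * dist P2 P3 + r * dist P1 P2 + q * dist P3 P1)
    with (p * dist P2 P3 + q * dist P3 P1 + r * dist P1 P2) by ring.
  destruct Req_EM_T; [reflexivity |].
  f_equal; f_equal; f_equal; ring.
Qed.

Section LinearImage.

Variables m11 m12 m21 m22 : R.

Definition linmap (P : pt) : pt :=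
  (m11 * fst P + m12 * snd P, m21 * fst P + m22 * snd P).

Lemma noncollinear_linmap (P1 P2 P3 : pt) : m11 * m22 - m12 * m21 <> 0 ->
  noncollinear P1 P2 P3 -> noncollinear (linmap P1) (linmap P2) (linmap P3).
Proof.
  unfold noncollinear, linmap; cbn [fst snd]; intros Hdet Hnc Hz; apply Hnc.
  apply (Rmult_eq_reg_l (m11 * m22 - m12 * m21)); [| exact Hdet].
  rewrite Rmult_0_r, <- Hz; ring.
Qed.

Hypothesis dist_linmap : forall P Q : pt, dist (linmap P) (linmap Q) = dist P Q.

Lemma Xh_linmap (h : R -> R -> R -> option R) (P1 P2 P3 X : pt) :
  Xh h P1 P2 P3 = Some X -> Xh h (linmap P1) (linmap P2) (linmap P3) = Some (linmap X).
Proof.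
  unfold Xh; rewrite !dist_linmap.
  destruct (h (dist P2 P3) (dist P3 P1) (dist P1 P2)); [| discriminate].
  destruct (h (dist P3 P1) (dist P1 P2) (dist P2 P3)); [| discriminate].
  destruct (h (dist P1 P2) (dist P2 P3) (dist P3 P1)); [| discriminate].
  destruct Req_EM_T; [discriminate |].
  intros HX; injection HX as <-; unfold linmap; cbn [fst snd].
  apply f_equal, f_equal2; unfold Rdiv; ring.
Qed.

Lemma Xh_fixed_by_symmetry (h : R -> R -> R -> option R) (V P X : pt) :
  bisymmetric h -> linmap V = V -> linmap (linmap P) = P ->
  noncollinear V P (linmap P) -> Xh h V P (linmap P) = Some X -> linmap X = X.
Proof.
  intros Hbis HV HP Hnc HX.
  pose proof (Xh_linmap h _ _ _ _ HX) as HX'.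
  rewrite HV, HP, Xh_transpose, HX in HX' by assumption.
  congruence.
Qed.

End LinearImage.

Definition mirror (sx sy : R) : pt -> pt := linmap sx 0 0 sy.

Definition swap_xy : pt -> pt := linmap 0 1 1 0.

Lemma mirror_eq (sx sy : R) (P : pt) : mirror sx sy P = (sx * fst P, sy * snd P).
Proof. unfold mirror, linmap; f_equal; ring. Qed.

Lemma swap_xy_eq (P : pt) : swap_xy P = (snd P, fst P).
Proof. unfold swap_xy, linmap; f_equal; ring. Qed.

Lemma sqr_sign_mul (s x : R) : s * s = 1 -> (s * x) ^ 2 = x ^ 2.
Proof. intros Hs; replace ((s * x) ^ 2) with ((s * s) * x ^ 2) by ring; rewrite Hs; ring. Qed.

Section Mirror.

Variables sx sy : R.
Hypotheses (Hsx : sx * sx = 1) (Hsy : sy * sy = 1).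

Lemma dist_mirror (P Q : pt) : dist (mirror sx sy P) (mirror sx sy Q) = dist P Q.
Proof.
  unfold dist; rewrite !mirror_eq; cbn [fst snd].
  rewrite <- !Rmult_minus_distr_l, !sqr_sign_mul by assumption; reflexivity.
Qed.

Lemma onE_mirror (a b : R) (P : pt) : onE a b P -> onE a b (mirror sx sy P).
Proof. unfold onE; rewrite mirror_eq; cbn [fst snd]; rewrite !sqr_sign_mul; auto. Qed.

Lemma normal_bisects_mirror (a b : R) (P Q R' : pt) : normal_bisects a b P Q R' ->
  normal_bisects a b (mirror sx sy P) (mirror sx sy Q) (mirror sx sy R').
Proof.
  unfold normal_bisects; cbv zeta; rewrite !dist_mirror, !mirror_eq; cbn [fst snd].
  intros Hn; rewrite <- (Rmult_0_r (sx * sy)), <- Hn; unfold Rdiv; ring.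
Qed.

Lemma is3periodic_mirror (a b : R) (P1 P2 P3 : pt) : is3periodic a b P1 P2 P3 ->
  is3periodic a b (mirror sx sy P1) (mirror sx sy P2) (mirror sx sy P3).
Proof.
  intros (Hnc & E1 & E2 & E3 & N1 & N2 & N3).
  repeat split; auto using onE_mirror, normal_bisects_mirror.
  apply noncollinear_linmap; [| exact Hnc].
  assert (Hdet : (sx * sy - 0 * 0) * (sx * sy - 0 * 0) = (sx * sx) * (sy * sy)) by ring.
  rewrite Hsx, Hsy in Hdet; intros Hz; rewrite Hz in Hdet; lra.
Qed.

Lemma locus_mirror (a b : R) (h : R -> R -> R -> option R) (X : pt) :
  locus a b h X -> locus a b h (mirror sx sy X).
Proof.
  intros (P1 & P2 & P3 & Hper & HX).
  exists (mirror sx sy P1), (mirror sx sy P2), (mirror sx sy P3); split.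
  - apply is3periodic_mirror, Hper.
  - apply Xh_linmap; [exact dist_mirror | exact HX].
Qed.

End Mirror.

Lemma dist_swap_xy (P Q : pt) : dist (swap_xy P) (swap_xy Q) = dist P Q.
Proof. unfold dist; rewrite !swap_xy_eq; cbn [fst snd]; f_equal; ring. Qed.

Lemma onE_swap_xy (a b : R) (P : pt) : onE a b P -> onE b a (swap_xy P).
Proof. unfold onE; rewrite swap_xy_eq; cbn [fst snd]; lra. Qed.

Lemma normal_bisects_swap_xy (a b : R) (P Q R' : pt) : normal_bisects a b P Q R' ->
  normal_bisects b a (swap_xy P) (swap_xy Q) (swap_xy R').
Proof.
  unfold normal_bisects; cbv zeta; rewrite !dist_swap_xy, !swap_xy_eq; cbn [fst snd].
  intros Hn; rewrite <- (Rmult_0_r (-1)), <- Hn; unfold Rdiv; ring.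
Qed.

Lemma is3periodic_swap_xy (a b : R) (P1 P2 P3 : pt) : is3periodic a b P1 P2 P3 ->
  is3periodic b a (swap_xy P1) (swap_xy P2) (swap_xy P3).
Proof.
  intros (Hnc & E1 & E2 & E3 & N1 & N2 & N3).
  repeat split; auto using onE_swap_xy, normal_bisects_swap_xy.
  apply noncollinear_linmap; [lra | exact Hnc].
Qed.

Lemma onE_poly (a b : R) (P : pt) : 0 < a -> 0 < b -> onE a b P ->
  b ^ 2 * fst P ^ 2 + a ^ 2 * snd P ^ 2 = a ^ 2 * b ^ 2.
Proof.
  unfold onE; intros Ha Hb HE.
  replace (b ^ 2 * fst P ^ 2 + a ^ 2 * snd P ^ 2)
    with ((fst P ^ 2 / a ^ 2 + snd P ^ 2 / b ^ 2) * (a ^ 2 * b ^ 2)) by (field; lra).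
  rewrite HE; ring.
Qed.

Section VertexChords.

Variables a b x2 y2 x3 y3 D2 D3 : R.
Hypotheses (Ha : 0 < a) (Hb : 0 < b)
  (E2 : b ^ 2 * x2 ^ 2 + a ^ 2 * y2 ^ 2 = a ^ 2 * b ^ 2)
  (E3 : b ^ 2 * x3 ^ 2 + a ^ 2 * y3 ^ 2 = a ^ 2 * b ^ 2)
  (D2pos : 0 < D2) (D3pos : 0 < D3)
  (F2 : D2 ^ 2 = (a - x2) ^ 2 + y2 ^ 2) (F3 : D3 ^ 2 = (a - x3) ^ 2 + y3 ^ 2)
  (Hangle : y2 * D3 + y3 * D2 = 0).

Lemma chord_off_vertex (x y D : R) : b ^ 2 * x ^ 2 + a ^ 2 * y ^ 2 = a ^ 2 * b ^ 2 ->
  0 < D -> D ^ 2 = (a - x) ^ 2 + y ^ 2 -> a - x <> 0.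
Proof.
  intros E HD F Hx; replace x with a in * by lra.
  assert (Hy : y ^ 2 = 0).
  { apply (Rmult_eq_reg_l (a ^ 2)); [lra | apply pow_nonzero; lra]. }
  assert (D = 0) by (apply pow2_eq_0; lra). lra.
Qed.

(* Squaring the bisector condition and eliminating [y^2] with the ellipse equation leaves
   [2 a b^2 (a - x2) (a - x3) (x2 - x3) = 0]. *)
Lemma vertex_chords_same_abscissa : x3 = x2.
Proof.
  assert (Hsq : y2 ^ 2 * D3 ^ 2 = y3 ^ 2 * D2 ^ 2).
  { replace (y2 ^ 2 * D3 ^ 2) with ((y2 * D3) ^ 2) by ring.
    replace (y2 * D3) with (- (y3 * D2)) by lra; ring. }
  rewrite F2, F3 in Hsq.
  assert (Hkey : b ^ 2 * (a - x2) * (a - x3) * (2 * a) * (x2 - x3) = 0).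
  { replace (b ^ 2 * (a - x2) * (a - x3) * (2 * a) * (x2 - x3))
      with ((a ^ 2 * y2 ^ 2) * (a - x3) ^ 2 - (a ^ 2 * y3 ^ 2) * (a - x2) ^ 2).
    - replace ((a ^ 2 * y2 ^ 2) * (a - x3) ^ 2 - (a ^ 2 * y3 ^ 2) * (a - x2) ^ 2)
        with (a ^ 2 * (y2 ^ 2 * ((a - x3) ^ 2 + y3 ^ 2) - y3 ^ 2 * ((a - x2) ^ 2 + y2 ^ 2)))
        by ring.
      rewrite Hsq; ring.
    - replace (a ^ 2 * y2 ^ 2) with (a ^ 2 * b ^ 2 - b ^ 2 * x2 ^ 2) by lra.
      replace (a ^ 2 * y3 ^ 2) with (a ^ 2 * b ^ 2 - b ^ 2 * x3 ^ 2) by lra.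
      ring. }
  pose proof (chord_off_vertex x2 y2 D2 E2 D2pos F2).
  pose proof (chord_off_vertex x3 y3 D3 E3 D3pos F3).
  apply Rmult_integral in Hkey as [Hz | Hz]; [| lra].
  exfalso; revert Hz.
  repeat apply Rmult_integral_contrapositive_currified; assumption || lra.
Qed.

Lemma vertex_chords_opposite_ordinate : y3 = - y2.
Proof.
  pose proof vertex_chords_same_abscissa as Hx; subst x3.
  assert (Hy : y3 ^ 2 = y2 ^ 2).
  { apply (Rmult_eq_reg_l (a ^ 2)); [lra | apply pow_nonzero; lra]. }
  assert (HD : D3 = D2) by (apply pow2_inj_pos; lra).
  subst D3.
  assert (Hz : (y2 + y3) * D2 = 0) by lra.
  apply Rmult_integral in Hz as [? | ?]; lra.
Qed.

End VertexChords.

Lemma is3periodic_vertex_x_symmetric (a b : R) (P2 P3 : pt) : 0 < a -> 0 < b ->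
  is3periodic a b (a, 0) P2 P3 -> P3 = mirror 1 (-1) P2.
Proof.
  intros Ha Hb (Hnc & _ & E2 & E3 & Hn & _).
  destruct (noncollinear_sides_pos _ _ _ Hnc) as (D2pos & _ & D3pos).
  rewrite dist_sym in D3pos.
  pose proof (dist_sqr (a, 0) P2) as F2; pose proof (dist_sqr (a, 0) P3) as F3.
  apply onE_poly in E2, E3; try assumption.
  unfold normal_bisects in Hn; cbv zeta in Hn.
  rewrite mirror_eq; destruct P2 as [x2 y2], P3 as [x3 y3]; cbn [fst snd] in *.
  set (D2 := dist (a, 0) (x2, y2)) in *; set (D3 := dist (a, 0) (x3, y3)) in *.
  clearbody D2 D3.
  replace ((0 - y2) ^ 2) with (y2 ^ 2) in F2 by ring.
  replace ((0 - y3) ^ 2) with (y3 ^ 2) in F3 by ring.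
  assert (Hangle : y2 * D3 + y3 * D2 = 0).
  { replace (y2 * D3 + y3 * D2)
      with ((a / a ^ 2 * ((y2 - 0) / D2 + (y3 - 0) / D3)
             - 0 / b ^ 2 * ((x2 - a) / D2 + (x3 - a) / D3)) * (a * D2 * D3))
      by (field; repeat split; lra).
    rewrite Hn; ring. }
  f_equal.
  - rewrite (vertex_chords_same_abscissa a b x2 y2 x3 y3 D2 D3); auto; ring.
  - rewrite (vertex_chords_opposite_ordinate a b x2 y2 x3 y3 D2 D3); auto; ring.
Qed.

Lemma has_vertex_map (f : pt -> pt) (V P1 P2 P3 : pt) :
  has_vertex V P1 P2 P3 -> has_vertex (f V) (f P1) (f P2) (f P3).
Proof. unfold has_vertex; intros [<- | [<- | <-]]; auto. Qed.

Lemma Xh_vertex_x_on_axis (a b : R) (h : R -> R -> R -> option R) (P2 P3 X : pt) :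
  0 < a -> 0 < b -> bisymmetric h -> is3periodic a b (a, 0) P2 P3 ->
  Xh h (a, 0) P2 P3 = Some X -> snd X = 0.
Proof.
  intros Ha Hb Hbis Hper HX.
  pose proof (is3periodic_vertex_x_symmetric a b P2 P3 Ha Hb Hper) as HP3; subst P3.
  assert (Hsym : mirror 1 (-1) X = X).
  { apply (Xh_fixed_by_symmetry 1 0 0 (-1) (dist_mirror 1 (-1) ltac:(ring) ltac:(ring))
             h (a, 0) P2 X Hbis); try exact (proj1 Hper); try exact HX;
      unfold linmap; apply injective_projections; cbn [fst snd]; ring. }
  destruct X as [x y]; rewrite mirror_eq in Hsym; cbn [fst snd] in *.
  injection Hsym; lra.
Qed.

Lemma Xh_on_x_axis (a b : R) (h : R -> R -> R -> option R) (P1 P2 P3 X : pt) :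
  0 < a -> 0 < b -> bisymmetric h -> is3periodic a b P1 P2 P3 ->
  has_vertex (a, 0) P1 P2 P3 -> Xh h P1 P2 P3 = Some X -> snd X = 0.
Proof.
  intros Ha Hb Hbis Hper [-> | [-> | ->]] HX.
  - exact (Xh_vertex_x_on_axis a b h _ _ _ Ha Hb Hbis Hper HX).
  - rewrite <- Xh_rot in HX; apply is3periodic_rot in Hper.
    exact (Xh_vertex_x_on_axis a b h _ _ _ Ha Hb Hbis Hper HX).
  - rewrite <- Xh_rot, <- Xh_rot in HX; apply is3periodic_rot, is3periodic_rot in Hper.
    exact (Xh_vertex_x_on_axis a b h _ _ _ Ha Hb Hbis Hper HX).
Qed.

Lemma Xh_on_y_axis (a b : R) (h : R -> R -> R -> option R) (P1 P2 P3 X : pt) :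
  0 < a -> 0 < b -> bisymmetric h -> is3periodic a b P1 P2 P3 ->
  has_vertex (0, b) P1 P2 P3 -> Xh h P1 P2 P3 = Some X -> fst X = 0.
Proof.
  intros Ha Hb Hbis Hper Hv HX.
  apply (has_vertex_map swap_xy) in Hv; rewrite swap_xy_eq in Hv.
  apply (Xh_linmap 0 1 1 0 dist_swap_xy) in HX.
  apply is3periodic_swap_xy in Hper.
  rewrite <- (Xh_on_x_axis b a h _ _ _ _ Hb Ha Hbis Hper Hv HX), swap_xy_eq.
  reflexivity.
Qed.

Lemma exists_level_one (c : R) : 0 < c -> exists t : R, c * t ^ 2 = 1.
Proof.
  intros Hc; exists (/ sqrt c).
  assert (Hs : 0 < sqrt c) by (apply sqrt_lt_R0, Hc).
  rewrite <- (pow2_sqrt c) at 1 by lra; field; lra.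
Qed.

Section PositiveDefinite.

Variables p q r : R.
Hypotheses (Hp : 0 < p) (Hdet : 0 < p * r - q ^ 2).

Lemma posdef_quad_decomp (u v : R) :
  p * (p * u ^ 2 + 2 * q * u * v + r * v ^ 2) = (p * u + q * v) ^ 2 + (p * r - q ^ 2) * v ^ 2.
Proof. ring. Qed.

Lemma posdef_quad_eq0 (u v : R) : p * u ^ 2 + 2 * q * u * v + r * v ^ 2 = 0 -> u = 0 /\ v = 0.
Proof.
  intros Hz; pose proof (posdef_quad_decomp u v) as Hdec; rewrite Hz, Rmult_0_r in Hdec.
  pose proof (pow2_ge_0 (p * u + q * v)); pose proof (pow2_ge_0 v).
  assert (0 <= (p * r - q ^ 2) * v ^ 2) by (apply Rmult_le_pos; lra).
  assert (Hv : v = 0).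
  { apply pow2_eq_0, (Rmult_eq_reg_l (p * r - q ^ 2)); lra. }
  subst v; split; [| reflexivity].
  apply pow2_eq_0, (Rmult_eq_reg_l p); lra.
Qed.

Lemma posdef_quad_pos (u v : R) : (u, v) <> (0, 0) -> 0 < p * u ^ 2 + 2 * q * u * v + r * v ^ 2.
Proof.
  intros Huv.
  assert (Hge : 0 <= p * u ^ 2 + 2 * q * u * v + r * v ^ 2).
  { apply (Rmult_le_reg_l p); [exact Hp |].
    rewrite Rmult_0_r, posdef_quad_decomp.
    apply Rplus_le_le_0_compat; [apply pow2_ge_0 |].
    apply Rmult_le_pos; [lra | apply pow2_ge_0]. }
  destruct (Rle_lt_or_eq_dec _ _ Hge) as [Hlt | Heq]; [exact Hlt |].
  destruct (posdef_quad_eq0 u v (eq_sym Heq)) as [-> ->]; contradiction (Huv eq_refl).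
Qed.

End PositiveDefinite.

Lemma is_ellipse_axes_aligned (S : pt -> Prop) : is_ellipse S ->
  (forall X, S X -> S (mirror (-1) (-1) X)) -> (forall X, S X -> S (mirror 1 (-1) X)) ->
  exists p r : R, 0 < p /\ 0 < r /\ forall X : pt, S X <-> p * fst X ^ 2 + r * snd X ^ 2 = 1.
Proof.
  intros (cx & cy & p & q & r & Hp & Hdet & HS) Hcentral Hmirror.
  assert (Hcenter : cx = 0 /\ cy = 0).
  { destruct (exists_level_one p Hp) as [e He].
    assert (L1 : S (cx + e, cy)) by (apply HS; cbn [fst snd]; rewrite <- He; ring).
    assert (L2 : S (cx - e, cy)) by (apply HS; cbn [fst snd]; rewrite <- He; ring).
    apply Hcentral, HS in L1, L2; rewrite mirror_eq in L1, L2; cbn [fst snd] in L1, L2.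
    destruct (posdef_quad_eq0 p q r Hp Hdet (2 * cx) (2 * cy)) as [Hx Hy]; [lra | split; lra]. }
  destruct Hcenter as [-> ->].
  assert (Hq : q = 0).
  { assert (Hdiag : 0 < p + 2 * q + r).
    { replace (p + 2 * q + r) with (p * 1 ^ 2 + 2 * q * 1 * 1 + r * 1 ^ 2) by ring.
      apply posdef_quad_pos; [exact Hp | exact Hdet | intros H; injection H; lra]. }
    destruct (exists_level_one _ Hdiag) as [t Ht].
    assert (L : S (t, t)) by (apply HS; cbn [fst snd]; rewrite <- Ht; ring).
    apply Hmirror, HS in L; rewrite mirror_eq in L; cbn [fst snd] in L.
    assert (Hqt : q * t ^ 2 = 0) by lra.
    apply Rmult_integral in Hqt as [Hq | Ht0]; [exact Hq |].
    rewrite Ht0 in Ht; lra. }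
  subst q; exists p, r; split; [exact Hp | split].
  - apply (Rmult_lt_reg_l p); lra.
  - intros X; rewrite HS.
    replace (p * (fst X - 0) ^ 2 + 2 * 0 * (fst X - 0) * (snd X - 0) + r * (snd X - 0) ^ 2)
      with (p * fst X ^ 2 + r * snd X ^ 2) by ring.
    reflexivity.
Qed.

Lemma Rabs_cases (x : R) : x = Rabs x \/ x = - Rabs x.
Proof.
  destruct (Rle_or_lt 0 x) as [Hx | Hx];
    [left; rewrite Rabs_pos_eq | right; rewrite Rabs_left]; lra.
Qed.

Lemma axis_ellipse_intercepts (p r x0 y1 : R) : p * x0 ^ 2 = 1 -> r * y1 ^ 2 = 1 ->
  forall x y : R, p * x ^ 2 + r * y ^ 2 = 1 <-> x ^ 2 / Rabs x0 ^ 2 + y ^ 2 / Rabs y1 ^ 2 = 1.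
Proof.
  intros Hx0 Hy1 x y; rewrite !pow2_abs.
  assert (Hp : p = / x0 ^ 2).
  { apply (Rmult_eq_reg_r (x0 ^ 2)); [rewrite Rinv_l; [exact Hx0 |] |];
      intros Hz; rewrite Hz in Hx0; lra. }
  assert (Hr : r = / y1 ^ 2).
  { apply (Rmult_eq_reg_r (y1 ^ 2)); [rewrite Rinv_l; [exact Hy1 |] |];
      intros Hz; rewrite Hz in Hy1; lra. }
  rewrite Hp, Hr; unfold Rdiv; split; intros H; lra.
Qed.

Theorem mainTheorem5 (a b : R) (h : R -> R -> R -> option R) :
  0 < b -> b < a ->
  homogeneous h -> bisymmetric h ->
  is_ellipse (locus a b h) ->
  forall P1 P2 P3 Q1 Q2 Q3 : pt,
    is3periodic a b P1 P2 P3 -> has_vertex (a, 0) P1 P2 P3 ->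
    Xh h P1 P2 P3 <> None ->
    is3periodic a b Q1 Q2 Q3 -> has_vertex (0, b) Q1 Q2 Q3 ->
    Xh h Q1 Q2 Q3 <> None ->
    exists alpha beta : R, 0 < alpha /\ 0 < beta /\
      (Xh h P1 P2 P3 = Some (alpha, 0) \/ Xh h P1 P2 P3 = Some (- alpha, 0)) /\
      (Xh h Q1 Q2 Q3 = Some (0, beta) \/ Xh h Q1 Q2 Q3 = Some (0, - beta)) /\
      (forall X : pt, locus a b h X <->
         (fst X)^2 / alpha^2 + (snd X)^2 / beta^2 = 1).
Proof.
  intros Hb Hba _ Hbis Hell P1 P2 P3 Q1 Q2 Q3 HP HvP HXP HQ HvQ HXQ.
  assert (Ha : 0 < a) by lra.
  destruct (Xh h P1 P2 P3) as [[x0 y0] |] eqn:EX; [| congruence].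
  destruct (Xh h Q1 Q2 Q3) as [[x1 y1] |] eqn:EY; [| congruence].
  pose proof (Xh_on_x_axis a b h _ _ _ _ Ha Hb Hbis HP HvP EX) as Hy0.
  pose proof (Xh_on_y_axis a b h _ _ _ _ Ha Hb Hbis HQ HvQ EY) as Hx1.
  cbn [fst snd] in Hy0, Hx1; subst y0 x1.
  destruct (is_ellipse_axes_aligned _ Hell
              (locus_mirror (-1) (-1) ltac:(ring) ltac:(ring) a b h)
              (locus_mirror 1 (-1) ltac:(ring) ltac:(ring) a b h))
    as (p & r & Hp & Hr & Hlocus).
  assert (Lx : locus a b h (x0, 0)) by (exists P1, P2, P3; split; assumption).
  assert (Ly : locus a b h (0, y1)) by (exists Q1, Q2, Q3; split; assumption).
  apply Hlocus in Lx, Ly; cbn [fst snd] in Lx, Ly.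
  assert (Hx0 : p * x0 ^ 2 = 1) by lra; assert (Hy1 : r * y1 ^ 2 = 1) by lra.
  exists (Rabs x0), (Rabs y1); split; [| split; [| split; [| split]]].
  - apply Rabs_pos_lt; intros Hz; rewrite Hz in Hx0; lra.
  - apply Rabs_pos_lt; intros Hz; rewrite Hz in Hy1; lra.
  - destruct (Rabs_cases x0) as [E | E]; [left | right]; rewrite <- E; reflexivity.
  - destruct (Rabs_cases y1) as [E | E]; [left | right]; rewrite <- E; reflexivity.
  - intros X; rewrite Hlocus; apply axis_ellipse_intercepts; assumption.
Qed.
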